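(* Let $S$ be a subspace of $W_0$ of finite codimension, and let $i_0>0$ be an integer. Let $M_{i_0,S}$ be the Lie subalgebra of $W$ generated by $t^{i_0}D$, $t^{i_0+1}D$, $t^{i_0}D^2$ and $S$. Then there is an integer $K>0$ with $W_{[K,\infty)}\subset M_{i_0,S}$.
   Context: Let $\mathbb{F}$ be an algebraically closed field of characteristic zero, and let $W=\mathcal{W}(\mathbb{Z},1)^{(1)}=\mathrm{span}\{t^iD^j\mid i\in\mathbb{Z},\,j\ge1\}$. Its Lie bracket is $$[t^iDf(D),t^jDg(D)]=t^{i+j}D\big((D+j)f(D+j)g(D)-(D+i)g(D+i)f(D)\big)$$ for $f,g\in\mathbb{F}[D]$. The algebra is $\mathbb{Z}$-graded by $W_i=\{t^iDf(D)\mid f\in\mathbb{F}[D]\}$. We write $W_{[K,\infty)}=\bigoplus_{k\ge K}W_k$. *)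

From HB Require Import structures.
From mathcomp Require Import all_boot all_order all_algebra.
Set Implicit Arguments. Unset Strict Implicit. Unset Printing Implicit Defensive.
Import Order.TTheory GRing.Theory Num.Theory.
Local Open Scope ring_scope.

(* An element of W = span{t^i D^j | i in Z, j >= 1} is encoded by its
   homogeneous components: x : int -> {poly F}, where the component
   x i = f encodes t^i D f(D).  Genuine elements of W are the finitely
   supported such functions. *)
Section WittType.
Variable F : fieldType.

Definition Wel := int -> {poly F}.

Definition finsupp (x : Wel) : Prop :=
  exists N : nat, forall i : int, (N < `|i|)%N -> x i = 0.

Definition suppN (N : nat) (x : Wel) : Prop :=
  forall i : int, (N < `|i|)%N -> x i = 0.

Definition homog (i : int) (f : {poly F}) : Wel :=
  fun k => if k == i then f else 0.

Definition W0 : Wel := fun _ => 0.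
Definition Wadd (x y : Wel) : Wel := fun k => x k + y k.
Definition Wscale (c : F) (x : Wel) : Wel := fun k => c *: x k.

Definition pshift (j : int) (f : {poly F}) : {poly F} :=
  f \Po ('X + (j%:~R)%:P).

(* [t^i D f(D), t^j D g(D)] = t^{i+j} D ((D+j) f(D+j) g(D) - (D+i) g(D+i) f(D)) *)
Definition brc (i j : int) (f g : {poly F}) : {poly F} :=
  pshift j ('X * f) * g - pshift i ('X * g) * f.

(* the bracket of two elements both supported in [-N, N] *)
Definition Wbr (N : nat) (x y : Wel) : Wel :=
  fun k => \sum_(a < (N + N).+1)
             brc (a%:Z - N%:Z) (k - (a%:Z - N%:Z))
                 (x (a%:Z - N%:Z)) (y (k - (a%:Z - N%:Z))).

Inductive lie_gen (X : Wel -> Prop) : Wel -> Prop :=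
  | lg_in x : X x -> lie_gen X x
  | lg_0 : lie_gen X W0
  | lg_add x y : lie_gen X x -> lie_gen X y -> lie_gen X (Wadd x y)
  | lg_scale c x : lie_gen X x -> lie_gen X (Wscale c x)
  | lg_br N x y : suppN N x -> suppN N y ->
      lie_gen X x -> lie_gen X y -> lie_gen X (Wbr N x y).

(* M_{i0,S}: generated by t^{i0}D, t^{i0+1}D, t^{i0}D^2 and S (S viewed
   inside W_0 via f |-> t^0 D f(D)). *)
Definition M_gens (i0 : int) (S : {poly F} -> Prop) (x : Wel) : Prop :=
  [\/ x = homog i0 1, x = homog (i0 + 1) 1, x = homog i0 'X
    | exists2 f, S f & x = homog 0 f].

Definition M_sub (i0 : int) (S : {poly F} -> Prop) : Wel -> Prop :=
  lie_gen (M_gens i0 S).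

Definition is_subspace (S : {poly F} -> Prop) : Prop :=
  S 0 /\ forall (c : F) (f g : {poly F}), S f -> S g -> S (c *: f + g).

Definition finite_codim (S : {poly F} -> Prop) : Prop :=
  exists (n : nat) (v : 'I_n -> {poly F}),
    forall p : {poly F}, exists c : 'I_n -> F,
      S (p - \sum_(l < n) c l *: v l).
End WittType.

From HB Require Import structures.
From mathcomp Require Import all_boot all_order all_algebra.
From mathcomp Require Import ring zify.
From Stdlib Require Import FunctionalExtensionality.
Set Implicit Arguments.
Unset Strict Implicit.
Unset Printing Implicit Defensive.
Import Order.TTheory GRing.Theory Num.Theory.

(* Write m = i0 and V_k (= Mcomp k) for the set of polynomials f with t^k D f(D)
   in M_{i0,S}.  Each V_k is a subspace and brackets map V_i x V_j into V_(i+j).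
   For deg f = a and deg g = b the bracket of t^i D f(D) and t^j D g(D) has
   degree a + b and leading coefficient f_a g_b ((a+1) j - (b+1) i), which in
   characteristic 0 vanishes only if (a+1) j = (b+1) i.  Iterated brackets with
   t^m D and t^(m+1) D put a nonzero constant in V_k for every k in the numerical
   semigroup spanned by m and m + 1 beyond 2m + 1; each bracket with t^m D^2
   raises the degree by one and the index by m; and the bracket of a constant
   with elements of S, which occur in every large degree, gives every large
   degree.  Hence for k large V_k contains polynomials of every degree, so it is
   all of F[D]. *)

Lemma numerical_semigroup_ind (P : nat -> Prop) (m n0 : nat) : 0 < m -> P n0 ->
    (forall k, n0 <= k -> P k -> P (k + m) /\ P (k + m.+1)) ->
  forall n, n0 + m * m <= n -> P n.
Proof.
move=> m_gt0 P0 P_step.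
have P_ge k x : n0 <= k -> P k -> P (k + x * m) /\ n0 <= k + x * m.
  move=> le_k Pk; elim: x => [|x [IHx le_x]]; first by rewrite mul0n addn0.
  rewrite mulSn [m + _]addnC addnA; split; last by lia.
  by case: (P_step _ le_x IHx).
have P_xy x y : P (n0 + y * m.+1 + x * m).
  apply: (P_ge _ _ _ _).1; first lia.
  elim: y => [|y IHy]; first by rewrite mul0n addn0.
  by rewrite mulSn [m.+1 + _]addnC addnA; case: (P_step _ _ IHy) => //; lia.
move=> n le_n; pose n' := n - n0 - m * m.
have n'_eq := divn_eq n' m; have lt_r := ltn_pmod n' m_gt0.
have -> : n = n0 + (n' %% m) * m.+1 + (n' %/ m + m - n' %% m) * m.
  by move: n'_eq lt_r; rewrite /n'; move: (n' %/ m) (n' %% m) => q r; nia.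
exact: P_xy.
Qed.

Local Open Scope ring_scope.

Section PolySize.
Variable R : nzRingType.
Implicit Types p q : {poly R}.

Lemma size_deriv_leq p : (size p^`() <= (size p).-1)%N.
Proof.
have [->|nz_p] := eqVneq p 0; first by rewrite deriv0 size_poly0.
by have := lt_size_deriv nz_p; rewrite (polySpred nz_p).
Qed.

Lemma size_polyM_leq_add p q (a b : nat) :
  (size p <= a.+1)%N -> (size q <= b.+1)%N -> (size (p * q)%R <= (a + b).+1)%N.
Proof. by move=> le_p le_q; apply: leq_trans (size_polyMleq _ _) _; lia. Qed.

Lemma coefM_top p q (a b : nat) :
  (size p <= a.+1)%N -> (size q <= b.+1)%N -> (p * q)`_(a + b)%N = p`_a * q`_b.
Proof.
move=> le_p le_q; rewrite coefM.
have lt_a : (a < (a + b).+1)%N by rewrite ltnS leq_addr.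
rewrite (bigD1 (Ordinal lt_a)) //= addKn big1 ?addr0 // => j /eqP ne_ja.
have [lt_ja|lt_aj|eq_ja] := ltngtP j a; last by case: ne_ja; apply: val_inj.
  by rewrite [q`__](leq_sizeP _ _ le_q) ?mulr0 //; lia.
by rewrite [p`__](leq_sizeP _ _ le_p) ?mul0r.
Qed.

Lemma coef_size_neq0 p (n : nat) : size p = n.+1 -> p`_n != 0.
Proof. by move=> sp; rewrite -[n]/(n.+1.-1) -sp -lead_coefE lead_coef_eq0 -size_poly_eq0 sp. Qed.

Lemma size_eq_coef_neq0 p (n : nat) : (size p <= n.+1)%N -> p`_n != 0 -> size p = n.+1.
Proof.
move=> le_p nz_pn; apply/eqP; rewrite eqn_leq le_p ltnNge.
by apply: contra nz_pn => le_pn; rewrite nth_default.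
Qed.
End PolySize.

Section TaylorRemainder.
Variable R : comNzRingType.
Implicit Types p f g : {poly R}.

Definition taylor_rem (c : R) p := p \Po ('X + c%:P) - p - c *: p^`().

Lemma size_taylor_rem c p : (size (taylor_rem c p) <= (size p).-2)%N.
Proof.
elim/poly_ind: p => [|q a IHq].
  by rewrite /taylor_rem comp_poly0 deriv0 scaler0 !subr0 size_poly0.
have -> : taylor_rem c (q * 'X + a%:P)
    = taylor_rem c q * 'X + c *: taylor_rem c q + (c * c) *: q^`().
  rewrite /taylor_rem comp_poly_MXaddC derivMXaddC -!mul_polyC polyCM; ring.
have [->|nz_q] := eqVneq q 0.
  by rewrite /taylor_rem comp_poly0 deriv0 !(scaler0, subr0, mul0r, addr0) size_poly0.
rewrite size_MXaddC (negbTE nz_q) /=.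
have le_X : (size (taylor_rem c q * 'X)%R <= (size q).-1)%N.
  have [->|nz_r] := eqVneq (taylor_rem c q) 0; first by rewrite mul0r size_poly0.
  rewrite size_mulX //; have := size_poly_gt0 (taylor_rem c q); rewrite nz_r; lia.
apply: leq_trans (size_polyD _ _) _; rewrite geq_max.
apply/andP; split; last exact: leq_trans (size_scale_leq _ _) (size_deriv_leq q).
apply: leq_trans (size_polyD _ _) _; rewrite geq_max le_X /=.
apply: leq_trans (size_scale_leq _ _) (leq_trans IHq (leq_pred _)).
Qed.

Lemma size_XM f (a : nat) : size f = a.+1 -> size ('X * f) = a.+2.
Proof. by move=> sf; rewrite mulrC size_mulX ?sf // -size_poly_eq0 sf. Qed.

Lemma size_derivXM_mul f g (a b : nat) : size f = a.+1 -> size g = b.+1 ->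
  (size (('X * f)^`() * g)%R <= (a + b).+1)%N.
Proof.
move=> /size_XM sXf sg; apply: size_polyM_leq_add; last by rewrite sg.
by apply: leq_trans (size_deriv_leq _) _; rewrite sXf.
Qed.

Lemma coef_derivXM_mul f g (a b : nat) : size f = a.+1 -> size g = b.+1 ->
  (('X * f)^`() * g)`_(a + b)%N = f`_a *+ a.+1 * g`_b.
Proof.
move=> sf sg; rewrite coefM_top ?coef_deriv ?coefXM ?sg //.
by apply: leq_trans (size_deriv_leq _) _; rewrite (size_XM sf).
Qed.

Lemma size_taylor_remXM_mul c f g (a b : nat) : size f = a.+1 -> size g = b.+1 ->
  (size (taylor_rem c ('X * f) * g)%R <= a + b)%N.
Proof.
move=> /size_XM sXf sg; apply: leq_trans (size_polyMleq _ _) _.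
by have := size_taylor_rem c ('X * f); rewrite sXf sg; lia.
Qed.
End TaylorRemainder.

Section PolySubspaces.
Variable F : fieldType.
Variable V : {poly F} -> Prop.
Hypothesis V0 : V 0.
Hypothesis V_lin : forall c f g, V f -> V g -> V (c *: f + g).

Lemma poly_subspace_of_sizes :
  (forall d : nat, exists2 r, V r & size r = d.+1) -> forall p, V p.
Proof.
move=> V_sizes p; elim: (size p) {-2}p (leqnn (size p)) => [|n IHn] q le_qn.
  by move: le_qn; rewrite size_poly_leq0 => /eqP ->.
have [|lt_nq] := leqP (size q) n; first exact: IHn.
have {le_qn lt_nq} sq : size q = n.+1 by apply/eqP; rewrite eqn_leq le_qn.
have [r Vr sr] := V_sizes n.
set c := q`_n / r`_n.
rewrite -[q](addrNK (c *: r)) addrC; apply: V_lin => //; apply: IHn.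
apply/leq_sizeP => k; rewrite leq_eqVlt => /orP[/eqP <-|lt_nk].
  by rewrite coefB coefZ divfK ?subrr ?coef_size_neq0.
by rewrite coefB coefZ !nth_default ?mulr0 ?subr0 ?sq ?sr.
Qed.
End PolySubspaces.

Lemma finite_codim_sizes (F : fieldType) (S : {poly F} -> Prop) : finite_codim S ->
  exists D0 : nat, forall d : nat, (D0 <= d)%N -> exists2 f, S f & size f = d.+1.
Proof.
case=> n [v v_span]; exists (\max_(l < n) size (v l))%N => d le_d.
have [c Sc] := v_span 'X^d; exists ('X^d - \sum_(l < n) c l *: v l) => //.
rewrite size_polyDl size_polyXn // size_polyN ltnS.
apply: leq_trans (size_sum _ _ _) _; apply: leq_trans le_d.
by apply/bigmax_leqP => l _; apply: leq_trans (size_scale_leq _ _) (leq_bigmax _).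
Qed.

Section Bracket.
Variable F : fieldType.
Implicit Types f g : {poly F}.

Lemma brc0l (i j : int) g : brc i j 0 g = 0.
Proof. by rewrite /brc /pshift mulr0 comp_poly0 mul0r mulr0 subr0. Qed.

Lemma brc0r (i j : int) f : brc i j f 0 = 0.
Proof. by rewrite /brc /pshift !mulr0 comp_poly0 mul0r subr0. Qed.

(* The top-degree terms [X f g] of the two products cancel. *)
Lemma brc_taylor (i j : int) f g : brc i j f g =
  j%:~R *: (('X * f)^`() * g) - i%:~R *: (('X * g)^`() * f)
  + (taylor_rem j%:~R ('X * f) * g - taylor_rem i%:~R ('X * g) * f).
Proof.
rewrite /brc /pshift /taylor_rem -!mul_polyC.
move: (_ \Po _) (_ \Po _) => Pf Pg; ring.
Qed.

Hypothesis F_char0 : [pchar F] =i pred0.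

Lemma intr_eq0_pchar0 (z : int) : (z%:~R == 0 :> F) = (z == 0).
Proof.
move/pcharf0P: F_char0 => natr_eq0.
by case: z => n; rewrite ?NegzE ?mulrNz ?oppr_eq0 -pmulrn natr_eq0.
Qed.

Lemma size_brc (i j : int) f g (a b : nat) : size f = a.+1 -> size g = b.+1 ->
  (a.+1)%:Z * j != (b.+1)%:Z * i -> size (brc i j f g) = (a + b).+1.
Proof.
move=> sf sg neq_ji.
have leA := size_derivXM_mul sf sg.
have leB := size_derivXM_mul sg sf; rewrite addnC in leB.
have leTf := size_taylor_remXM_mul j%:~R sf sg.
have leTg := size_taylor_remXM_mul i%:~R sg sf; rewrite addnC in leTg.
have coefB := coef_derivXM_mul sg sf; rewrite addnC in coefB.
apply: size_eq_coef_neq0; rewrite brc_taylor.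
  apply: leq_trans (size_polyD _ _) _; rewrite geq_max.
  apply/andP; split; apply: leq_trans (size_polyD _ _) _; rewrite geq_max size_polyN.
    by rewrite !(leq_trans (size_scale_leq _ _)).
  by rewrite (leq_trans leTf) ?(leq_trans leTg).
rewrite !coefD !coefN !coefZ coef_derivXM_mul // coefB.
rewrite [_`_(a + b)]nth_default // [_`_(a + b)]nth_default // subr0 addr0.
have -> : j%:~R * (f`_a *+ a.+1 * g`_b) - i%:~R * (g`_b *+ b.+1 * f`_a)
    = f`_a * g`_b * ((a.+1)%:Z * j - (b.+1)%:Z * i)%:~R.
  by rewrite intrB !intrM -!pmulrn; ring.
by rewrite !mulf_neq0 ?coef_size_neq0 // intr_eq0_pchar0 subr_eq0.
Qed.
End Bracket.

Section HomogeneousElements.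
Variable F : fieldType.
Implicit Types (f g : {poly F}) (x : Wel F).

Lemma homog0 (k : int) : homog k (0 : {poly F}) = W0 F.
Proof. by apply: functional_extensionality => l; rewrite /homog /W0; case: eqP. Qed.

Lemma homogDZ (k : int) (c : F) f g :
  homog k (c *: f + g) = Wadd (Wscale c (homog k f)) (homog k g).
Proof.
apply: functional_extensionality => l; rewrite /homog /Wadd /Wscale.
by case: eqP; rewrite ?scaler0 ?addr0.
Qed.

Lemma suppN_homog (N : nat) (i : int) f : (`|i| <= N)%N -> suppN N (homog i f).
Proof. by move=> le_iN l lt_Nl; rewrite /homog; case: eqP => // eq_li; lia. Qed.

Lemma Wbr_homog (N : nat) (i j : int) f g : (`|i| <= N)%N -> (`|j| <= N)%N ->
  Wbr N (homog i f) (homog j g) = homog (i + j) (brc i j f g).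
Proof.
move=> le_iN le_jN; apply: functional_extensionality => k; rewrite /Wbr /homog.
have lt_iN : (absz (i + N%:Z)%R < (N + N).+1)%N by lia.
rewrite (bigD1 (Ordinal lt_iN)) //= big1 => [|a ne_ai]; last first.
  have -> : (a%:Z - N%:Z == i) = false.
    by apply/negbTE; apply: contra ne_ai => /eqP eq_ai; apply/eqP/val_inj => /=; lia.
  by rewrite brc0l.
have -> : (absz (i + N%:Z))%:Z - N%:Z = i by lia.
rewrite eqxx addr0; have [->|ne_k] := eqVneq k (i + j); first by rewrite addrAC subrr add0r eqxx.
have -> : (k - i == j) = false by apply/negbTE; apply: contra ne_k => /eqP; lia.
by rewrite brc0r.
Qed.

Lemma lie_gen_homog_sum (X : Wel F -> Prop) x : finsupp x ->
  (forall k : int, lie_gen X (homog k (x k))) -> lie_gen X x.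
Proof.
case=> N x_supp x_homog.
pose trunc (n : nat) : Wel F := fun k => if k < n%:Z - N%:Z then x k else 0.
have trunc0 : trunc 0%N = W0 F.
  apply: functional_extensionality => k; rewrite /trunc /W0.
  by case: ifP => // lt_k; apply: x_supp; lia.
have truncS n : trunc n.+1 = Wadd (trunc n) (homog (n%:Z - N%:Z) (x (n%:Z - N%:Z))).
  apply: functional_extensionality => k; rewrite /trunc /Wadd /homog.
  have [->|ne_k] := eqVneq k (n%:Z - N%:Z).
    by rewrite ifT ?ifF ?add0r //; lia.
  by rewrite addr0; congr (if _ then _ else _); apply/idP/idP; lia.
have -> : x = trunc (N + N).+1.
  apply: functional_extensionality => k; rewrite /trunc; case: ifP => // ge_k.
  by apply: x_supp; lia.
elim: (N + N).+1 => [|n IHn]; first by rewrite trunc0; apply: lg_0.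
by rewrite truncS; apply: lg_add.
Qed.
End HomogeneousElements.

Section GradedComponents.
Variable F : fieldType.
Hypothesis F_char0 : [pchar F] =i pred0.
Variable S : {poly F} -> Prop.
Variable m : nat.
Hypothesis m_gt0 : (0 < m)%N.

Definition Mcomp (k : int) (f : {poly F}) : Prop := M_sub m%:Z S (homog k f).

Definition has_deg (k : int) (d : nat) : Prop := exists2 f, Mcomp k f & size f = d.+1.

Lemma Mcomp0 k : Mcomp k 0.
Proof. by rewrite /Mcomp homog0; apply: lg_0. Qed.

Lemma McompDZ k c f g : Mcomp k f -> Mcomp k g -> Mcomp k (c *: f + g).
Proof. by rewrite /Mcomp homogDZ => Mf Mg; apply: lg_add => //; apply: lg_scale. Qed.

Lemma Mcomp_brc i j f g : Mcomp i f -> Mcomp j g -> Mcomp (i + j) (brc i j f g).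
Proof.
rewrite /Mcomp -(@Wbr_homog _ (maxn `|i| `|j|)) ?leq_maxl ?leq_maxr // => Mf Mg.
by apply: lg_br => //; apply: suppN_homog; rewrite ?leq_maxl ?leq_maxr.
Qed.

Lemma Mcomp_full k : (forall d, has_deg k d) -> forall p, Mcomp k p.
Proof. exact: poly_subspace_of_sizes (@Mcomp0 k) (@McompDZ k). Qed.

Lemma has_deg_brc i j (a b : nat) : has_deg i a -> has_deg j b ->
  (a.+1)%:Z * j != (b.+1)%:Z * i -> has_deg (i + j) (a + b).
Proof.
move=> [f Mf sf] [g Mg sg] neq_ji.
by exists (brc i j f g); [apply: Mcomp_brc | apply: size_brc].
Qed.

Lemma has_deg_m0 : has_deg m%:Z 0.
Proof. by exists 1; [apply: lg_in; apply: Or41 | rewrite size_poly1]. Qed.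

Lemma has_deg_mS0 : has_deg (m%:Z + 1) 0.
Proof. by exists 1; [apply: lg_in; apply: Or42 | rewrite size_poly1]. Qed.

Lemma has_deg_m1 : has_deg m%:Z 1.
Proof. by exists 'X; [apply: lg_in; apply: Or43 | rewrite size_polyX]. Qed.

Lemma has_deg0_S f (d : nat) : S f -> size f = d.+1 -> has_deg 0 d.
Proof. by move=> Sf sf; exists f => //; apply: lg_in; apply: Or44; exists f. Qed.

Lemma has_deg0_ge (n : nat) : (2 * m + 1 + m * m <= n)%N -> has_deg n%:Z 0.
Proof.
apply: (@numerical_semigroup_ind (fun n => has_deg n%:Z 0)) => // [|k le_k k_deg].
  have -> : (2 * m + 1)%N%:Z = m%:Z + 1 + m%:Z by lia.
  by apply: (has_deg_brc has_deg_mS0 has_deg_m0); lia.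
split; first by rewrite PoszD; apply: (has_deg_brc k_deg has_deg_m0); lia.
have -> : (k + m.+1)%N%:Z = k%:Z + (m%:Z + 1) by lia.
by apply: (has_deg_brc k_deg has_deg_mS0); lia.
Qed.

Lemma has_deg_ge (d n : nat) : (2 * m + 1 + m * m + d * m <= n)%N -> has_deg n%:Z d.
Proof.
elim: d n => [|d IHd] n le_n; first by apply: has_deg0_ge; lia.
have -> : n%:Z = (n - m)%N%:Z + m%:Z by lia.
by rewrite -addn1; apply: (has_deg_brc (IHd _ _) has_deg_m1); lia.
Qed.

Lemma Mcomp_ge (D0 : nat) : (forall d, (D0 <= d)%N -> exists2 f, S f & size f = d.+1) ->
  forall k : int, (2 * m + 1 + m * m + D0 * m)%N%:Z <= k -> forall p, Mcomp k p.
Proof.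
move=> S_sizes k le_k; apply: Mcomp_full => d.
have -> : k = (absz k)%:Z by lia.
have [le_d|lt_d] := leqP D0 d; last by apply: has_deg_ge; nia.
have [f Sf sf] := S_sizes d le_d; rewrite -[k in has_deg k]add0r -[d]addn0.
by apply: (has_deg_brc (has_deg0_S Sf sf) (has_deg0_ge _)); nia.
Qed.
End GradedComponents.

Theorem lemma2p1 (F : closedFieldType) (hchar : [pchar F] =i pred0)
  (S : {poly F} -> Prop) (hS : is_subspace S) (hcod : finite_codim S)
  (i0 : int) (hi0 : 0 < i0) :
  exists K : int, 0 < K /\
    forall x : Wel F, finsupp x -> (forall i : int, i < K -> x i = 0) ->
      M_sub i0 S x.
Proof.
case: i0 hi0 => [m m_gt0|//].
have [D0 S_sizes] := finite_codim_sizes hcod.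
exists (2 * m + 1 + m * m + D0 * m)%N%:Z; split => [|x x_fin x_low]; first lia.
apply: lie_gen_homog_sum x_fin _ => k.
have [lt_k|ge_k] := ltP k (2 * m + 1 + m * m + D0 * m)%N%:Z.
  by rewrite x_low // homog0; apply: lg_0.
exact: (Mcomp_ge hchar (m_gt0 : (0 < m)%N) S_sizes ge_k).
Qed.
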